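(* Let $b>0$, $\zeta>0$, $T>0$. Let $w:[0,T]\to[0,\infty)$ be a measurable, locally integrable function, $\mathcal Y:[0,T+b^{-1}]\to\mathbb R$ a function, and $E(u,t)\in\mathbb R$ for $0\le u\le t\le T$, such that for all $0\le u\le t\le T$, $w(t)\le w(u)-\frac b2\int_u^t w(s)\,ds+E(u,t)+\mathcal Y(t)-\mathcal Y(u)$. Assume further (i) $w(0)\le\zeta/2$; (ii) $\mathcal Y(t+s)-\mathcal Y(t)\le\zeta/8$ for all $t\in[0,T]$, $s\in[0,b^{-1}]$; (iii) $E(u,t)\le\zeta/8$ whenever $0\le t-u\le b^{-1}$. Then $\sup_{t\in[0,T]}w(t)<\zeta$.
   Context: In the paper this is applied with $w(t)=\|\mathbf w(t)\|$ the norm of the weighted amplitude of the stochastic CRN, $\mathcal Y$ a martingale noise term, and $E(u,t)$ an error term of order $\Omega^{-2}\mathcal M_{u,t}$ with $\mathcal M_{u,t}$ the number of reactions in $[u,t]$. *)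

From Stdlib Require Export Reals Lra.
Open Scope R_scope.

(* Stdlib has no Lebesgue integral.  [IsIntegralOf w T I] says that
   I u t plays the role of  \int_u^t w(s) ds  for 0 <= u <= t <= T:
   it is additive over adjacent intervals and satisfies the elementary
   lower/upper bounds by constants.  The Lebesgue integral of any
   measurable, locally integrable w : [0,T] -> [0,oo) satisfies these
   properties, so the theorem below (quantified over every such I)
   implies the paper's statement. *)
Definition IsIntegralOf (w : R -> R) (T : R) (I : R -> R -> R) : Prop :=
  (forall u s t, 0 <= u <= s -> s <= t <= T -> I u t = I u s + I s t) /\
  (forall u t c, 0 <= u <= t -> t <= T ->
     (forall s, u <= s <= t -> c <= w s) -> c * (t - u) <= I u t) /\
  (forall u t c, 0 <= u <= t -> t <= T ->
     (forall s, u <= s <= t -> w s <= c) -> I u t <= c * (t - u)).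

(* The hypotheses bound the growth of w over any window of length 1/b by
   zeta/4 minus the dissipation (b/2) * int w.  On [0, 1/b] this gives
   w <= zeta/2 + zeta/4.  On a later window [t - 1/b, t], if w t is large
   then w >= w t - zeta/4 throughout the window (apply the window bound to
   each of its subwindows ending at t), so the dissipation over the whole
   window is at least (w t - zeta/4)/2, which forces w t <= 3 zeta/4 again
   once w (t - 1/b) <= 3 zeta/4.  Induction on the number of windows covering
   [0, t] concludes. *)

From Stdlib Require Import Reals Lra.
Open Scope R_scope.

Lemma IsIntegralOf_ge_const (w : R -> R) (T : R) (I : R -> R -> R) u t c :
  IsIntegralOf w T I -> 0 <= u <= t -> t <= T ->
  (forall s, u <= s <= t -> c <= w s) -> c * (t - u) <= I u t.
Proof. intros [_ [hlo _]]; apply hlo. Qed.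

Lemma IsIntegralOf_nonneg (w : R -> R) (T : R) (I : R -> R -> R) u t :
  IsIntegralOf w T I -> (forall s, 0 <= s <= T -> 0 <= w s) ->
  0 <= u <= t -> t <= T -> 0 <= I u t.
Proof.
  intros hI hw hut htT.
  assert (h : 0 * (t - u) <= I u t).
  { apply (IsIntegralOf_ge_const w T I u t 0 hI hut htT).
    intros s hs; apply hw; lra. }
  lra.
Qed.

Section WindowBound.

Variables (b zeta T : R) (w : R -> R) (I : R -> R -> R) (Y : R -> R)
  (E : R -> R -> R).

Hypothesis hb : 0 < b.
Hypothesis hw_nonneg : forall t, 0 <= t <= T -> 0 <= w t.
Hypothesis hI : IsIntegralOf w T I.
Hypothesis hineq : forall u t, 0 <= u -> u <= t -> t <= T ->
  w t <= w u - b / 2 * I u t + E u t + Y t - Y u.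
Hypothesis h0 : w 0 <= zeta / 2.
Hypothesis hY : forall t s, 0 <= t <= T -> 0 <= s <= / b ->
  Y (t + s) - Y t <= zeta / 8.
Hypothesis hE : forall u t, 0 <= u -> u <= t -> t <= T -> t - u <= / b ->
  E u t <= zeta / 8.

Lemma window_growth u t : 0 <= u -> u <= t -> t <= T -> t - u <= / b ->
  w t <= w u - b / 2 * I u t + zeta / 4.
Proof.
  intros hu hut htT hwin.
  pose proof (hineq u t hu hut htT) as hw.
  pose proof (hE u t hu hut htT hwin) as hEut.
  pose proof (hY u (t - u) ltac:(lra) ltac:(lra)) as hYut.
  replace (u + (t - u)) with t in hYut by ring.
  lra.
Qed.

Lemma window_growth_weak u t : 0 <= u -> u <= t -> t <= T -> t - u <= / b ->
  w t <= w u + zeta / 4.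
Proof.
  intros hu hut htT hwin.
  pose proof (window_growth u t hu hut htT hwin).
  pose proof (IsIntegralOf_nonneg w T I u t hI hw_nonneg ltac:(lra) htT).
  assert (0 <= b / 2 * I u t) by (apply Rmult_le_pos; lra).
  lra.
Qed.

Lemma bound_first_window t : 0 <= t <= T -> t <= / b -> w t <= 3 * zeta / 4.
Proof.
  intros ht htb.
  pose proof (window_growth_weak 0 t ltac:(lra) ltac:(lra) ltac:(lra)
                ltac:(lra)).
  lra.
Qed.

Lemma bound_next_window t : / b <= t <= T ->
  w (t - / b) <= 3 * zeta / 4 -> w t <= 3 * zeta / 4.
Proof.
  intros ht hprev.
  set (u := t - / b) in *.
  assert (hib : 0 < / b) by (apply Rinv_0_lt_compat; lra).
  assert (hlow : forall s, u <= s <= t -> w t - zeta / 4 <= w s).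
  { intros s hs.
    pose proof (window_growth_weak s t ltac:(unfold u in *; lra) ltac:(lra)
                  ltac:(lra) ltac:(unfold u in *; lra)).
    lra. }
  pose proof (IsIntegralOf_ge_const w T I u t _ hI ltac:(unfold u; lra)
                ltac:(lra) hlow) as hdiss.
  replace (t - u) with (/ b) in hdiss by (unfold u; ring).
  assert (hdiss' : (w t - zeta / 4) / 2 <= b / 2 * I u t).
  { replace ((w t - zeta / 4) / 2) with (b / 2 * ((w t - zeta / 4) * / b))
      by (field; lra).
    apply Rmult_le_compat_l; lra. }
  pose proof (window_growth u t ltac:(unfold u; lra) ltac:(unfold u; lra)
                ltac:(lra) ltac:(unfold u; lra)).
  lra.
Qed.

Lemma bound_on_windows (n : nat) t : 0 <= t <= T -> t <= INR n / b ->
  w t <= 3 * zeta / 4.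
Proof.
  pose proof (Rinv_0_lt_compat b hb) as hib.
  revert t; induction n as [|n IH]; intros t ht htn.
  - apply bound_first_window; auto.
    rewrite Rdiv_0_l in htn; lra.
  - destruct (Rle_lt_dec t (/ b)) as [hle | hgt].
    + apply bound_first_window; auto.
    + apply bound_next_window; [lra |].
      apply IH; [lra |].
      rewrite S_INR in htn.
      replace ((INR n + 1) / b) with (INR n / b + / b) in htn by (field; lra).
      lra.
Qed.

End WindowBound.

Lemma covered_by_windows b t : 0 < b -> exists n : nat, t <= INR n / b.
Proof.
  intros hb.
  destruct (INR_unbounded (t * b)) as [n hn].
  exists n.
  apply Rmult_le_reg_r with b; [lra |].
  replace (INR n / b * b) with (INR n) by (field; lra).
  lra.
Qed.

Theorem mainTheorem4 (b zeta T : R) (w : R -> R) (I : R -> R -> R)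
    (Y : R -> R) (E : R -> R -> R)
    (hb : 0 < b) (hzeta : 0 < zeta) (hT : 0 < T)
    (hw_nonneg : forall t, 0 <= t <= T -> 0 <= w t)
    (hI : IsIntegralOf w T I)
    (hineq : forall u t, 0 <= u -> u <= t -> t <= T ->
       w t <= w u - b / 2 * I u t + E u t + Y t - Y u)
    (h0 : w 0 <= zeta / 2)
    (hY : forall t s, 0 <= t <= T -> 0 <= s <= / b ->
       Y (t + s) - Y t <= zeta / 8)
    (hE : forall u t, 0 <= u -> u <= t -> t <= T -> t - u <= / b ->
       E u t <= zeta / 8) :
  exists M, M < zeta /\ forall t, 0 <= t <= T -> w t <= M.
Proof.
  exists (3 * zeta / 4); split; [lra |].
  intros t ht.
  destruct (covered_by_windows b t hb) as [n hn].
  exact (bound_on_windows b zeta T w I Y E hb hw_nonneg hI hineq h0 hY hE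
           n t ht hn).
Qed.
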